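(* Let $S$ be a right ample semigroup and let $\mathcal{R}'$ be a binary relation on $S$. Then $S$ has a semigroup of straight left I-quotients $Q$ such that $S$ is embedded in $Q$ as a unary semigroup (that is, $a^*=a^{-1}a$ for all $a\in S$) and $\mathcal{R}^Q\cap(S\times S)=\mathcal{R}'$, if and only if $\mathcal{R}'$ is a left congruence on $S$ and $S$ satisfies: \begin{itemize} \item[(A1)] For all $\alpha,\beta\in S$ there exist $\gamma,\delta\in S$ such that $\gamma\,\mathcal{R}'\,\delta\,\mathcal{R}'\,\delta\beta=\gamma\alpha$ and $\alpha\beta^*=\gamma^*\alpha$. \item[(A2)] For all $\alpha,\beta,\gamma\in S$, $\gamma\alpha\,\mathcal{R}'\,\gamma\beta$ implies $\gamma^*\alpha\,\mathcal{R}'\,\gamma^*\beta$. \item[(A3)] $\mathcal{R}'\subseteq\mathcal{R}^*$. \end{itemize}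
   Context: For an element $a$ of an inverse semigroup $Q$, $a^{-1}$ is its unique inverse. A subsemigroup $S$ of an inverse semigroup $Q$ is a straight left I-order in $Q$ (and $Q$ a semigroup of straight left I-quotients of $S$) if every $q\in Q$ can be written $q=a^{-1}b$ with $a,b\in S$ and $a\,\mathcal{R}^Q\,b$, where $\mathcal{R}^Q$ is Green's $\mathcal{R}$-relation of $Q$. On a semigroup $S$: $a\,\mathcal{R}^*\,b$ iff for all $x,y\in S^1$, $xa=ya\Leftrightarrow xb=yb$; $a\,\mathcal{L}^*\,b$ iff for all $x,y\in S^1$, $ax=ay\Leftrightarrow bx=by$. $S$ is right adequate if $E(S)$ is a semilattice (commuting idempotents) and every element $a$ is $\mathcal{L}^*$-related to an idempotent, necessarily unique, denoted $a^*$. $S$ is right ample if it is right adequate and $b^*a=a(ba)^*$ for all $a,b\in S$. A left congruence is a left compatible equivalence relation. *)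

Definition associative {T : Type} (mul : T -> T -> T) : Prop :=
  forall a b c, mul a (mul b c) = mul (mul a b) c.

Definition idempotent {T : Type} (mul : T -> T -> T) (e : T) : Prop :=
  mul e e = e.

(* Left action of S^1 (None = adjoined identity) and right action. *)
Definition lmul1 {T : Type} (mul : T -> T -> T) (x : option T) (a : T) : T :=
  match x with Some x => mul x a | None => a end.
Definition rmul1 {T : Type} (mul : T -> T -> T) (a : T) (x : option T) : T :=
  match x with Some x => mul a x | None => a end.

Definition Rstar {T : Type} (mul : T -> T -> T) (a b : T) : Prop :=
  forall x y : option T, lmul1 mul x a = lmul1 mul y a <-> lmul1 mul x b = lmul1 mul y b.

Definition Lstar {T : Type} (mul : T -> T -> T) (a b : T) : Prop :=
  forall x y : option T, rmul1 mul a x = rmul1 mul a y <-> rmul1 mul b x = rmul1 mul b y.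

(* S is right adequate, with star a = a^* the (necessarily unique) idempotent
   L*-related to a. *)
Definition right_adequate {S : Type} (mul : S -> S -> S) (star : S -> S) : Prop :=
  associative mul /\
  (forall e f, idempotent mul e -> idempotent mul f -> mul e f = mul f e) /\
  (forall a, idempotent mul (star a) /\ Lstar mul a (star a)).

Definition right_ample {S : Type} (mul : S -> S -> S) (star : S -> S) : Prop :=
  right_adequate mul star /\
  (forall a b, mul (star b) a = mul a (star (mul b a))).

Definition is_inverse {Q : Type} (mul : Q -> Q -> Q) (a x : Q) : Prop :=
  mul (mul a x) a = a /\ mul (mul x a) x = x.

Definition inverse_semigroup {Q : Type} (mul : Q -> Q -> Q) (inv : Q -> Q) : Prop :=
  associative mul /\
  (forall a, is_inverse mul a (inv a)) /\
  (forall a x, is_inverse mul a x -> x = inv a).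

Definition greenR {Q : Type} (mul : Q -> Q -> Q) (a b : Q) : Prop :=
  (exists x : option Q, a = rmul1 mul b x) /\ (exists y : option Q, b = rmul1 mul a y).

Definition left_congruence {S : Type} (mul : S -> S -> S) (R : S -> S -> Prop) : Prop :=
  (forall a, R a a) /\ (forall a b, R a b -> R b a) /\
  (forall a b c, R a b -> R b c -> R a c) /\
  (forall a b c, R a b -> R (mul c a) (mul c b)).

Definition straight_left_Iquotients_with {S : Type} (mulS : S -> S -> S) (star : S -> S)
    (R' : S -> S -> Prop) : Prop :=
  exists (Q : Type) (mulQ : Q -> Q -> Q) (inv : Q -> Q) (f : S -> Q),
    inverse_semigroup mulQ inv /\
    (forall a b, f a = f b -> a = b) /\
    (forall a b, f (mulS a b) = mulQ (f a) (f b)) /\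
    (forall q : Q, exists a b : S, q = mulQ (inv (f a)) (f b) /\ greenR mulQ (f a) (f b)) /\
    (forall a, f (star a) = mulQ (inv (f a)) (f a)) /\
    (forall a b, greenR mulQ (f a) (f b) <-> R' a b).

(* Necessity is read off in Q: writing f(α) f(β)^{-1} as a straight quotient
   f(γ)^{-1} f(δ) produces the witnesses of (A1), and (A2), (A3) hold because R^Q is a
   left congruence contained in R^*.
   Sufficiency: a^{-1} b (with a R' b) is represented by the pair (a, b), two pairs
   (a, b) and (c, d) being identified when a^* = c^* and xa = yc <-> xb = yd for all
   x, y.  (A1) rewrites b c^{-1} as g^{-1} h, so (a^{-1} b)(c^{-1} d) := (ga)^{-1}(hd),
   and (A3) makes this independent of all choices; the inverse of a^{-1} b is b^{-1} a.
   The element a is sent to u^{-1}(ua) for any u with u R' ua and u^* a = a; such u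
   exists by (A1) applied to a and a^*, and since (A2) forces u^* R' a, two elements
   of S are R-related in Q exactly when they are R'-related. *)

From Stdlib Require Import ClassicalEpsilon FunctionalExtensionality PropExtensionality.
From Stdlib Require Import ProofIrrelevance.

Section InverseSemigroup.
Variables (Q : Type) (m : Q -> Q -> Q) (i : Q -> Q).
Hypothesis HI : inverse_semigroup m i.
Local Infix "⋅" := m (at level 40, left associativity).

Lemma inv_mulA a b c : a ⋅ (b ⋅ c) = a ⋅ b ⋅ c.
Proof. apply (proj1 HI). Qed.

Lemma mul_inv_mul a : a ⋅ i a ⋅ a = a.
Proof. apply (proj1 (proj2 HI) a). Qed.

Lemma inv_mul_inv a : i a ⋅ a ⋅ i a = i a.
Proof. apply (proj1 (proj2 HI) a). Qed.

Lemma inverse_unique a x : a ⋅ x ⋅ a = a -> x ⋅ a ⋅ x = x -> x = i a.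
Proof. intros H1 H2; apply (proj2 (proj2 HI)); split; assumption. Qed.

Lemma inv_inv a : i (i a) = a.
Proof. symmetry; apply inverse_unique; [apply inv_mul_inv | apply mul_inv_mul]. Qed.

Lemma inv_idem e : e ⋅ e = e -> i e = e.
Proof. intro He; symmetry; apply inverse_unique; rewrite ?He; reflexivity. Qed.

Lemma mul_inv_idem a : a ⋅ i a ⋅ (a ⋅ i a) = a ⋅ i a.
Proof. rewrite inv_mulA, mul_inv_mul; reflexivity. Qed.

Lemma inv_mul_idem a : i a ⋅ a ⋅ (i a ⋅ a) = i a ⋅ a.
Proof. rewrite inv_mulA, inv_mul_inv; reflexivity. Qed.

(* The inverse x of e f satisfies f x e = x, by uniqueness of inverses; hence x is
   idempotent, so x = i x = e f. *)
Lemma idem_mul e f : e ⋅ e = e -> f ⋅ f = f -> e ⋅ f ⋅ (e ⋅ f) = e ⋅ f.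
Proof.
  intros He Hf.
  pose proof (mul_inv_mul (e ⋅ f)) as Hefx. pose proof (inv_mul_inv (e ⋅ f)) as Hxef.
  set (x := i (e ⋅ f)) in *.
  assert (Hx : f ⋅ x ⋅ e = x).
  { apply inverse_unique.
    - transitivity (e ⋅ f ⋅ x ⋅ (e ⋅ f)); [|exact Hefx].
      rewrite !inv_mulA, <- (inv_mulA e f f), Hf, <- (inv_mulA _ e e), He, ?inv_mulA.
      reflexivity.
    - transitivity (f ⋅ (x ⋅ (e ⋅ f) ⋅ x) ⋅ e); [|rewrite Hxef; reflexivity].
      rewrite !inv_mulA, <- (inv_mulA _ e e), He, <- (inv_mulA _ f f), Hf, ?inv_mulA.
      reflexivity. }
  assert (Hxx : x ⋅ x = x).
  { rewrite <- Hx at 1 2.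
    transitivity (f ⋅ (x ⋅ (e ⋅ f) ⋅ x) ⋅ e); [rewrite !inv_mulA; reflexivity|].
    rewrite Hxef; exact Hx. }
  assert (Hef : e ⋅ f = x).
  { rewrite <- (inv_inv (e ⋅ f)); apply inv_idem; exact Hxx. }
  rewrite Hef; exact Hxx.
Qed.

Lemma idem_comm e f : e ⋅ e = e -> f ⋅ f = f -> e ⋅ f = f ⋅ e.
Proof.
  intros He Hf.
  assert (Hfe : f ⋅ e = i (e ⋅ f)).
  { apply inverse_unique.
    - transitivity (e ⋅ f ⋅ (e ⋅ f)); [|apply idem_mul; assumption].
      rewrite !inv_mulA, <- (inv_mulA _ f f), Hf, <- (inv_mulA _ e e), He; reflexivity.
    - transitivity (f ⋅ e ⋅ (f ⋅ e)); [|apply idem_mul; assumption].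
      rewrite !inv_mulA, <- (inv_mulA _ e e), He, <- (inv_mulA _ f f), Hf; reflexivity. }
  rewrite Hfe, inv_idem by (apply idem_mul; assumption); reflexivity.
Qed.

Lemma inv_mul a b : i (a ⋅ b) = i b ⋅ i a.
Proof.
  symmetry; apply inverse_unique.
  - transitivity (a ⋅ (b ⋅ i b ⋅ (i a ⋅ a)) ⋅ b); [rewrite !inv_mulA; reflexivity|].
    rewrite (idem_comm (b ⋅ i b)) by (apply mul_inv_idem || apply inv_mul_idem).
    rewrite !inv_mulA, mul_inv_mul, <- (inv_mulA a b (i b)), <- (inv_mulA a _ b), mul_inv_mul.
    reflexivity.
  - transitivity (i b ⋅ (i a ⋅ a ⋅ (b ⋅ i b)) ⋅ i a); [rewrite !inv_mulA; reflexivity|].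
    rewrite (idem_comm (i a ⋅ a)) by (apply mul_inv_idem || apply inv_mul_idem).
    rewrite !inv_mulA, inv_mul_inv, <- (inv_mulA (i b) (i a) a), <- (inv_mulA (i b) _ (i a)),
      inv_mul_inv.
    reflexivity.
Qed.

Lemma greenR_iff a b : greenR m a b <-> a ⋅ i a = b ⋅ i b.
Proof.
  split.
  - intros [[x Hx] [y Hy]].
    assert (Ea : a = b ⋅ i b ⋅ a).
    { destruct x as [x|]; simpl in Hx; subst a; [rewrite inv_mulA, mul_inv_mul|rewrite mul_inv_mul];
        reflexivity. }
    assert (Eb : b = a ⋅ i a ⋅ b).
    { destruct y as [y|]; simpl in Hy; subst b; [rewrite inv_mulA, mul_inv_mul|rewrite mul_inv_mul];
        reflexivity. }
    assert (Fa : a ⋅ i a = b ⋅ i b ⋅ (a ⋅ i a))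
      by (rewrite Ea at 1; rewrite !inv_mulA; reflexivity).
    assert (Fb : b ⋅ i b = a ⋅ i a ⋅ (b ⋅ i b))
      by (rewrite Eb at 1; rewrite !inv_mulA; reflexivity).
    rewrite Fa, (idem_comm (b ⋅ i b)), <- Fb by apply mul_inv_idem; reflexivity.
  - intro H; split.
    + exists (Some (i b ⋅ a)); simpl; rewrite inv_mulA, <- H, mul_inv_mul; reflexivity.
    + exists (Some (i a ⋅ b)); simpl; rewrite inv_mulA, H, mul_inv_mul; reflexivity.
Qed.

Lemma greenR_mull c a b : greenR m a b -> greenR m (c ⋅ a) (c ⋅ b).
Proof.
  intros [[x Hx] [y Hy]]; split.
  - exists x; destruct x; simpl in *; rewrite Hx; [apply inv_mulA|reflexivity].
  - exists y; destruct y; simpl in *; rewrite Hy; [apply inv_mulA|reflexivity].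
Qed.

Lemma lmul1_mulA x a b : lmul1 m x (a ⋅ b) = lmul1 m x a ⋅ b.
Proof. destruct x; simpl; [apply inv_mulA|reflexivity]. Qed.

Lemma greenR_Rstar a b : greenR m a b -> Rstar m a b.
Proof.
  intros [[x Hx] [y Hy]] u v.
  assert (Hr : forall c z, lmul1 m u c = lmul1 m v c ->
                 lmul1 m u (rmul1 m c z) = lmul1 m v (rmul1 m c z)).
  { intros c [z|] E; simpl; rewrite ?lmul1_mulA, E; reflexivity. }
  split; intro E; [rewrite Hy | rewrite Hx]; apply Hr; exact E.
Qed.

Section StraightQuotient.
Variables (A B a b : Q).
Hypothesis Hquot : A ⋅ i B = i a ⋅ b.
Hypothesis Hab : a ⋅ i a = b ⋅ i b.

Lemma straight_quotient_conj : A ⋅ (i B ⋅ B) = i a ⋅ a ⋅ A.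
Proof.
  assert (Ha : i a ⋅ a = A ⋅ i B ⋅ B ⋅ i A).
  { transitivity (i a ⋅ b ⋅ i (i a ⋅ b)).
    - rewrite inv_mul, inv_inv, inv_mulA, <- (inv_mulA _ b (i b)), <- Hab, inv_mulA, inv_mul_inv.
      reflexivity.
    - rewrite <- Hquot, inv_mul, inv_inv, !inv_mulA; reflexivity. }
  rewrite Ha, <- (inv_mulA _ (i A) A), <- (inv_mulA A (i B) B), <- (inv_mulA A _ (i A ⋅ A)),
    (idem_comm (i B ⋅ B)) by apply inv_mul_idem.
  rewrite (inv_mulA A (i A ⋅ A)), (inv_mulA A (i A) A), mul_inv_mul; reflexivity.
Qed.

Lemma straight_quotient_mul : b ⋅ B = a ⋅ A.
Proof.
  transitivity (a ⋅ (i a ⋅ a ⋅ A)); [|rewrite !inv_mulA, mul_inv_mul; reflexivity].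
  rewrite <- straight_quotient_conj, !inv_mulA, <- (inv_mulA a A (i B)), Hquot, inv_mulA, Hab,
    mul_inv_mul.
  reflexivity.
Qed.

Lemma straight_quotient_greenR : greenR m b (b ⋅ B).
Proof.
  split; [|exists (Some B); reflexivity].
  exists (Some (i B)); simpl.
  rewrite straight_quotient_mul, <- inv_mulA, Hquot, inv_mulA, Hab, mul_inv_mul; reflexivity.
Qed.

End StraightQuotient.

Section Necessity.
Variables (S : Type) (mul : S -> S -> S) (star : S -> S) (R : S -> S -> Prop) (f : S -> Q).
Hypothesis f_inj : forall a b, f a = f b -> a = b.
Hypothesis f_mul : forall a b, f (mul a b) = f a ⋅ f b.
Hypothesis f_straight : forall q : Q, exists a b : S, q = i (f a) ⋅ f b /\ greenR m (f a) (f b).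
Hypothesis f_star : forall a, f (star a) = i (f a) ⋅ f a.
Hypothesis f_greenR : forall a b, greenR m (f a) (f b) <-> R a b.

Lemma necessary_left_congruence : left_congruence mul R.
Proof.
  split; [|split; [|split]].
  - intro a; apply f_greenR, greenR_iff; reflexivity.
  - intros a b; rewrite <- !f_greenR, !greenR_iff; intro H; symmetry; exact H.
  - intros a b c; rewrite <- !f_greenR, !greenR_iff; congruence.
  - intros a b c; rewrite <- !f_greenR, !f_mul; apply greenR_mull.
Qed.

Lemma necessary_A1 alpha beta : exists gamma delta : S,
  R gamma delta /\ R delta (mul delta beta) /\
  mul delta beta = mul gamma alpha /\ mul alpha (star beta) = mul (star gamma) alpha.
Proof.
  destruct (f_straight (f alpha ⋅ i (f beta))) as (gamma & delta & Hquot & HR).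
  pose proof (proj1 (greenR_iff _ _) HR) as Hrange.
  exists gamma, delta; split; [|split; [|split]].
  - apply f_greenR; exact HR.
  - apply f_greenR; rewrite f_mul; apply (straight_quotient_greenR (f alpha) _ (f gamma));
      assumption.
  - apply f_inj; rewrite !f_mul; apply straight_quotient_mul; assumption.
  - apply f_inj; rewrite !f_mul, !f_star.
    apply (straight_quotient_conj _ _ _ (f delta)); assumption.
Qed.

Lemma necessary_A2 alpha beta gamma :
  R (mul gamma alpha) (mul gamma beta) -> R (mul (star gamma) alpha) (mul (star gamma) beta).
Proof.
  rewrite <- !f_greenR, !f_mul, f_star, <- !inv_mulA; apply greenR_mull.
Qed.

Lemma necessary_A3 a b : R a b -> Rstar mul a b.
Proof.
  rewrite <- f_greenR; intros HR x y.
  assert (Hf : forall z c, f (lmul1 mul z c) = lmul1 m (option_map f z) (f c))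
    by (intros [z|] c; simpl; [apply f_mul|reflexivity]).
  split; intro E; apply f_inj; apply (f_equal f) in E; rewrite !Hf in *;
    apply (greenR_Rstar _ _ HR); exact E.
Qed.

End Necessity.

End InverseSemigroup.

Section InverseSemigroupCriterion.
Variables (Q : Type) (m : Q -> Q -> Q) (i : Q -> Q).
Local Infix "⋅" := m (at level 40, left associativity).
Hypothesis mulA : forall a b c, a ⋅ (b ⋅ c) = a ⋅ b ⋅ c.
Hypothesis mul_inv_mul : forall a, a ⋅ i a ⋅ a = a.
Hypothesis inv_inv : forall a, i (i a) = a.
Hypothesis inv_mul : forall a b, i (a ⋅ b) = i b ⋅ i a.
Hypothesis mul_inv_comm : forall a b, a ⋅ i a ⋅ (b ⋅ i b) = b ⋅ i b ⋅ (a ⋅ i a).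

Lemma idem_mul_inv e : e ⋅ e = e -> e = e ⋅ i e.
Proof.
  intro He.
  assert (Hie : i e ⋅ i e = i e) by (rewrite <- inv_mul, He; reflexivity).
  assert (E1 : e = e ⋅ i e ⋅ (i e ⋅ e)).
  { rewrite !mulA, <- (mulA e (i e) (i e)), Hie, mul_inv_mul; reflexivity. }
  assert (E2 : e ⋅ i e ⋅ (i e ⋅ e) = i e).
  { transitivity (e ⋅ i e ⋅ (i e ⋅ i (i e))); [rewrite inv_inv; reflexivity|].
    rewrite mul_inv_comm, inv_inv, !mulA, <- (mulA (i e) e e), He.
    rewrite <- (inv_inv e) at 2; apply mul_inv_mul. }
  assert (Eie : e = i e) by (rewrite E1 at 1; exact E2).
  rewrite <- Eie, He; reflexivity.
Qed.

Lemma inverse_semigroup_intro : inverse_semigroup m i.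
Proof.
  assert (Hcomm : forall e f, e ⋅ e = e -> f ⋅ f = f -> e ⋅ f = f ⋅ e).
  { intros e f He Hf; rewrite (idem_mul_inv e He), (idem_mul_inv f Hf); apply mul_inv_comm. }
  assert (inv_mul_inv : forall a, i a ⋅ a ⋅ i a = i a).
  { intro a; rewrite <- (inv_inv a) at 2; apply mul_inv_mul. }
  split; [exact mulA | split].
  - intro a; split; [apply mul_inv_mul | apply inv_mul_inv].
  - intros a x [H1 H2].
    assert (Ixa : x ⋅ a ⋅ (x ⋅ a) = x ⋅ a) by (rewrite mulA, H2; reflexivity).
    assert (Iax : a ⋅ x ⋅ (a ⋅ x) = a ⋅ x) by (rewrite mulA, H1; reflexivity).
    assert (Iia : i a ⋅ a ⋅ (i a ⋅ a) = i a ⋅ a) by (rewrite mulA, inv_mul_inv; reflexivity).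
    assert (Iai : a ⋅ i a ⋅ (a ⋅ i a) = a ⋅ i a) by (rewrite mulA, mul_inv_mul; reflexivity).
    assert (Ex : x = i a ⋅ a ⋅ x).
    { transitivity (x ⋅ a ⋅ (i a ⋅ a) ⋅ x).
      - transitivity (x ⋅ (a ⋅ i a ⋅ a) ⋅ x); [rewrite mul_inv_mul; symmetry; exact H2|].
        rewrite !mulA; reflexivity.
      - rewrite (Hcomm _ _ Ixa Iia), <- (mulA (i a ⋅ a) (x ⋅ a) x), H2; reflexivity. }
    assert (Eia : i a = i a ⋅ a ⋅ x).
    { transitivity (i a ⋅ (a ⋅ x) ⋅ (a ⋅ i a)).
      - transitivity (i a ⋅ (a ⋅ x ⋅ a) ⋅ i a); [rewrite H1, inv_mul_inv; reflexivity|].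
        rewrite !mulA; reflexivity.
      - rewrite <- (mulA (i a) (a ⋅ x)), (Hcomm _ _ Iax Iai), !mulA, inv_mul_inv; reflexivity. }
    rewrite Ex, <- Eia; reflexivity.
Qed.

End InverseSemigroupCriterion.

Section RightAmple.
Variables (S : Type) (mul : S -> S -> S) (star : S -> S).
Hypothesis Hample : right_ample mul star.
Local Infix "⋅" := mul (at level 40, left associativity).
Local Notation "a ^*" := (star a) (at level 8, left associativity, format "a ^*").

Lemma mulA a b c : a ⋅ (b ⋅ c) = a ⋅ b ⋅ c.
Proof. apply (proj1 (proj1 Hample)). Qed.

Lemma star_idem a : a^* ⋅ a^* = a^*.
Proof. apply (proj2 (proj2 (proj1 Hample)) a). Qed.

Lemma star_comm a b : a^* ⋅ b^* = b^* ⋅ a^*.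
Proof. apply (proj1 (proj2 (proj1 Hample))); apply star_idem. Qed.

Lemma star_cancel a x y : a ⋅ x = a ⋅ y -> a^* ⋅ x = a^* ⋅ y.
Proof. apply (proj2 (proj2 (proj2 (proj1 Hample)) a) (Some x) (Some y)). Qed.

Lemma star_fixed_iff a x : a ⋅ x = a <-> a^* ⋅ x = a^*.
Proof. apply (proj2 (proj2 (proj2 (proj1 Hample)) a) (Some x) None). Qed.

Lemma mul_star a : a ⋅ a^* = a.
Proof. apply (star_fixed_iff a), star_idem. Qed.

Lemma ample a b : b^* ⋅ a = a ⋅ (b ⋅ a)^*.
Proof. apply (proj2 Hample). Qed.

Lemma star_mul_star a b : (a ⋅ b)^* ⋅ b^* = (a ⋅ b)^*.
Proof. apply (star_fixed_iff (a ⋅ b)); rewrite <- mulA, mul_star; reflexivity. Qed.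

Lemma star_star_mul a b : b^* ⋅ (a ⋅ b)^* = (a ⋅ b)^*.
Proof. rewrite star_comm; apply star_mul_star. Qed.

Lemma star_star a : a^*^* = a^*.
Proof.
  pose proof (proj1 (star_fixed_iff _ _) (star_idem a)) as H.
  rewrite <- H, <- (star_comm a), mul_star; reflexivity.
Qed.

Lemma star_mul_fixed v b : v^* ⋅ b = b -> (v ⋅ b)^* = b^*.
Proof.
  intro H; rewrite ample in H; apply star_fixed_iff in H.
  rewrite <- (star_mul_star v b), star_comm; exact H.
Qed.

Lemma star_eq_cancel a p q : a ⋅ p^* = a ⋅ q^* ->
  p^* ⋅ a^* = p^* -> q^* ⋅ a^* = q^* -> p^* = q^*.
Proof.
  intros H Hp Hq; apply star_cancel in H.
  rewrite star_comm, Hp, star_comm, Hq in H; exact H.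
Qed.

Section Sufficiency.
Variable R : S -> S -> Prop.
Hypothesis HR : left_congruence mul R.
Hypothesis A1 : forall alpha beta : S, exists gamma delta : S,
  R gamma delta /\ R delta (delta ⋅ beta) /\
  delta ⋅ beta = gamma ⋅ alpha /\ alpha ⋅ beta^* = gamma^* ⋅ alpha.
Hypothesis A2 : forall alpha beta gamma : S,
  R (gamma ⋅ alpha) (gamma ⋅ beta) -> R (gamma^* ⋅ alpha) (gamma^* ⋅ beta).
Hypothesis A3 : forall a b : S, R a b -> Rstar mul a b.

Lemma R_refl a : R a a.
Proof. apply (proj1 HR). Qed.

Lemma R_sym a b : R a b -> R b a.
Proof. apply (proj1 (proj2 HR)). Qed.

Lemma R_trans a b c : R a b -> R b c -> R a c.
Proof. apply (proj1 (proj2 (proj2 HR))). Qed.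

Lemma R_mull c a b : R a b -> R (c ⋅ a) (c ⋅ b).
Proof. intro H; apply (proj2 (proj2 (proj2 HR))), H. Qed.

Lemma R_cancel a b x y : R a b -> x ⋅ a = y ⋅ a -> x ⋅ b = y ⋅ b.
Proof. intro H; apply (A3 a b H (Some x) (Some y)). Qed.

Lemma R_cancel_iff a b x y : R a b -> (x ⋅ a = y ⋅ a <-> x ⋅ b = y ⋅ b).
Proof. intro H; split; apply R_cancel; [exact H | apply R_sym, H]. Qed.

Lemma R_fixed a b x : R a b -> x ⋅ a = a -> x ⋅ b = b.
Proof. intro H; apply (A3 a b H (Some x) None). Qed.

Lemma R_star_eq p q : R p^* q^* -> p^* = q^*.
Proof.
  intro H.
  rewrite <- (R_fixed _ _ _ (R_sym _ _ H) (star_idem q)), star_comm.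
  exact (R_fixed _ _ _ H (star_idem p)).
Qed.

(* In the quotient semigroup, [A1_witness b c g h] says that b c^{-1} = g^{-1} h. *)
Definition A1_witness b c g h :=
  R g h /\ R h (h ⋅ c) /\ h ⋅ c = g ⋅ b /\ b ⋅ c^* = g^* ⋅ b.

Lemma A1_witness_ex b c : exists g h, A1_witness b c g h.
Proof. apply A1. Qed.

Lemma A1_witness_star {b c g h} : A1_witness b c g h -> (g ⋅ b)^* = b^* ⋅ c^*.
Proof.
  intros (_ & _ & _ & H); rewrite ample in H; apply star_cancel in H.
  rewrite star_star_mul in H; symmetry; exact H.
Qed.

Lemma A1_witness_conj {b c g h} : A1_witness b c g h -> h^* ⋅ c = c ⋅ b^*.
Proof.
  intro Hw; pose proof (A1_witness_star Hw) as Hs; destruct Hw as (_ & _ & E & _).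
  rewrite <- E in Hs; rewrite ample, Hs, star_comm, mulA, mul_star; reflexivity.
Qed.

Lemma A1_witness_sym {b c g h} : A1_witness b c g h -> A1_witness c b h g.
Proof.
  intro Hw; pose proof (A1_witness_conj Hw) as Hc; destruct Hw as (Hgh & Hh & E & _).
  split; [apply R_sym, Hgh | split; [|split; symmetry; assumption]].
  rewrite <- E; apply R_trans with h; assumption.
Qed.

Lemma R_mul_pair {a b c d g h} : R a b -> R c d -> A1_witness b c g h -> R (g ⋅ a) (h ⋅ d).
Proof.
  intros Hab Hcd (_ & _ & E & _).
  apply R_trans with (g ⋅ b); [apply R_mull, Hab|].
  rewrite <- E; apply R_mull, Hcd.
Qed.

(* [pair_equiv a b c d] is the condition for a^{-1} b = c^{-1} d. *)
Definition pair_equiv a b c d :=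
  a^* = c^* /\ forall x y, x ⋅ a = y ⋅ c <-> x ⋅ b = y ⋅ d.

Lemma pair_equiv_refl a b : R a b -> pair_equiv a b a b.
Proof. intro H; split; [reflexivity | intros x y; apply R_cancel_iff, H]. Qed.

Lemma pair_equiv_sym a b c d : pair_equiv a b c d -> pair_equiv c d a b.
Proof.
  intros [Hs H]; split; [symmetry; exact Hs|].
  intros x y; specialize (H y x); split; intro E; symmetry; apply H; symmetry; exact E.
Qed.

Lemma pair_equiv_diag p q : p^* = q^* -> pair_equiv p p q q.
Proof. intro H; split; [exact H | reflexivity]. Qed.

Lemma pair_equiv_star_r a b c d : R a b -> R c d -> pair_equiv a b c d -> b^* = d^*.
Proof.
  intros Hab Hcd [Hs H]; destruct (A1_witness_ex c a) as (u & v & Hw).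
  pose proof (A1_witness_conj Hw) as Hv; destruct Hw as (_ & _ & E & Hu).
  rewrite Hs, mul_star in Hu; rewrite <- Hs, mul_star in Hv.
  assert (Evu : v ⋅ b = u ⋅ d) by (apply H; exact E).
  rewrite <- (star_mul_fixed v b), <- (star_mul_fixed u d), Evu; [reflexivity| |].
  - apply (R_fixed c); [exact Hcd | symmetry; exact Hu].
  - apply (R_fixed a); [exact Hab | exact Hv].
Qed.

Lemma pair_equiv_swap a b c d : R a b -> R c d -> pair_equiv a b c d -> pair_equiv b a d c.
Proof.
  intros Hab Hcd He; split; [exact (pair_equiv_star_r a b c d Hab Hcd He)|].
  intros x y; destruct He as [_ H]; symmetry; apply H.
Qed.

(* Both equations are brought to a common left multiple by (A1), applied twice;
   the idempotent s^* this introduces is removed again by (A3). *)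
Lemma pair_equiv_trans_impl a b a' b' a'' b'' :
  R a b -> R a'' b'' -> a'^* = a''^* ->
  (forall x y, x ⋅ a = y ⋅ a' -> x ⋅ b = y ⋅ b') ->
  (forall x y, x ⋅ a' = y ⋅ a'' -> x ⋅ b' = y ⋅ b'') ->
  forall x y, x ⋅ a = y ⋅ a'' -> x ⋅ b = y ⋅ b''.
Proof.
  intros Hab Hab'' Hs H1 H2 x y Exy.
  destruct (A1_witness_ex a' a'') as (u & v & Hw).
  pose proof (A1_witness_conj Hw) as Hv; destruct Hw as (_ & _ & E & Hu).
  rewrite Hs, mul_star in Hv; rewrite <- Hs, mul_star in Hu.
  assert (Eb : u ⋅ b' = v ⋅ b'') by (apply H2; symmetry; exact E).
  destruct (A1_witness_ex y v) as (s & t & _ & _ & Ets & Hs').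
  assert (Ka : s ⋅ x ⋅ a = t ⋅ u ⋅ a').
  { rewrite <- mulA, Exy, mulA, <- Ets, <- mulA, E, mulA; reflexivity. }
  apply H1 in Ka.
  assert (Kb : s ⋅ (x ⋅ b) = s ⋅ (y ⋅ b'')).
  { rewrite mulA, Ka, <- mulA, Eb, mulA, Ets, <- mulA; reflexivity. }
  apply star_cancel in Kb.
  assert (Fv : v^* ⋅ b'' = b'') by (apply (R_fixed a''); [exact Hab'' | exact Hv]).
  rewrite (mulA s^* y b''), <- Hs', <- (mulA y v^* b''), Fv in Kb.
  rewrite <- Kb; symmetry; apply (R_fixed (x ⋅ a)); [apply R_mull, Hab|].
  rewrite Exy, mulA, <- Hs', <- mulA, Hv; reflexivity.
Qed.

Lemma pair_equiv_trans a b c d e f : R a b -> R c d -> R e f ->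
  pair_equiv a b c d -> pair_equiv c d e f -> pair_equiv a b e f.
Proof.
  intros Hab Hcd Hef H1 H2.
  pose proof (pair_equiv_star_r _ _ _ _ Hab Hcd H1) as Hbd.
  pose proof (pair_equiv_star_r _ _ _ _ Hcd Hef H2) as Hdf.
  destruct H1 as [Hac H1], H2 as [Hce H2].
  split; [rewrite Hac; exact Hce|].
  intros x y; split.
  - apply (pair_equiv_trans_impl a b c d e f); try assumption; intros; apply H1 || apply H2;
      assumption.
  - apply (pair_equiv_trans_impl b a d c f e); try (apply R_sym; assumption);
      [congruence| |]; intros; apply H1 || apply H2; assumption.
Qed.

Lemma star_mul_compat a b a' b' g g' e : pair_equiv a b a' b' ->
  g^* ⋅ b = b ⋅ e -> g'^* ⋅ b' = b' ⋅ e -> (g ⋅ a)^* = (g' ⋅ a')^*.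
Proof.
  intros [Hs H] Hg Hg'.
  destruct (A1_witness_ex a' a) as (u & v & Hw).
  pose proof (A1_witness_conj Hw) as Hv; destruct Hw as (_ & _ & E & Hu).
  rewrite Hs, mul_star in Hu; rewrite <- Hs, mul_star in Hv.
  assert (Eb : v ⋅ b = u ⋅ b') by (apply H; exact E).
  assert (Egb : v ⋅ g^* ⋅ b = u ⋅ g'^* ⋅ b').
  { rewrite <- (mulA v), Hg, mulA, Eb, <- (mulA u b'), <- Hg', mulA; reflexivity. }
  apply H in Egb.
  rewrite <- (mulA v), <- (mulA u), !ample, !mulA, E in Egb.
  apply (star_eq_cancel (u ⋅ a')); [exact Egb| |].
  - rewrite <- E, (star_mul_fixed v a Hv); apply star_mul_star.
  - rewrite (star_mul_fixed u a' (eq_sym Hu)); apply star_mul_star.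
Qed.

Lemma pair_equiv_mul a b c d a' b' c' d' g h g' h' :
  pair_equiv a b a' b' -> pair_equiv c d c' d' ->
  A1_witness b c g h -> A1_witness b' c' g' h' ->
  pair_equiv (g ⋅ a) (h ⋅ d) (g' ⋅ a') (h' ⋅ d').
Proof.
  intros Hab Hcd (_ & _ & E & Hg) (_ & _ & E' & Hg').
  split.
  - apply (star_mul_compat a b a' b' g g' c^*); [exact Hab | symmetry; exact Hg|].
    rewrite (proj1 Hcd); symmetry; exact Hg'.
  - intros x y; rewrite !mulA; split; intro Z.
    + apply Hab in Z; rewrite <- !mulA, <- E, <- E', !mulA in Z.
      apply Hcd in Z; exact Z.
    + apply Hcd in Z; rewrite <- !mulA, E, E', !mulA in Z.
      apply Hab in Z; exact Z.
Qed.

Lemma pair_equiv_assoc a b c d e f g h g1 h1 g2 h2 g3 h3 :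
  R a b -> R c d -> R e f ->
  A1_witness b c g h -> A1_witness d e g1 h1 ->
  A1_witness (h ⋅ d) e g2 h2 -> A1_witness b (g1 ⋅ c) g3 h3 ->
  pair_equiv (g2 ⋅ (g ⋅ a)) (h2 ⋅ f) (g3 ⋅ a) (h3 ⋅ (h1 ⋅ f)).
Proof.
  intros Hab Hcd Hef (_ & _ & E & Hg) (_ & _ & E1 & Hg1) (_ & _ & E2 & Hg2) (_ & _ & E3 & Hg3).
  split.
  - rewrite mulA; apply (star_eq_cancel a); [|apply star_mul_star..].
    rewrite <- !ample; apply (R_cancel b a); [apply R_sym, Hab|].
    assert (Hgb : g ⋅ ((g2 ⋅ g)^* ⋅ b) = g ⋅ (b ⋅ (g1 ⋅ c)^*)).
    { transitivity (g2^* ⋅ h ⋅ c).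
      { rewrite mulA, <- ample, <- (mulA g2^* g b), <- E, mulA; reflexivity. }
      transitivity (h ⋅ g1^* ⋅ c).
      2:{ rewrite mulA, <- E, <- (mulA h c), <- ample, mulA; reflexivity. }
      apply (R_cancel d c); [apply R_sym, Hcd|].
      rewrite <- (mulA g2^* h d), <- Hg2, <- (mulA h g1^* d), <- Hg1, mulA; reflexivity. }
    apply star_cancel in Hgb; rewrite mulA, star_star_mul in Hgb.
    rewrite <- Hg3, Hgb, mulA, <- Hg, <- mulA, star_star_mul; reflexivity.
  - intros x y; rewrite !mulA, (R_cancel_iff a b) by exact Hab.
    transitivity (x ⋅ g2 ⋅ (h ⋅ c) = y ⋅ h3 ⋅ (g1 ⋅ c)).
    { rewrite <- (mulA y h3 (g1 ⋅ c)), E, E3, !mulA; reflexivity. }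
    rewrite !mulA, (R_cancel_iff c d) by exact Hcd.
    rewrite <- (mulA (x ⋅ g2) h d), <- (mulA x g2 (h ⋅ d)), <- E2.
    rewrite <- (mulA (y ⋅ h3) g1 d), <- E1, !mulA.
    apply R_cancel_iff, Hef.
Qed.

Lemma pair_equiv_mul_inv {a b g h} : R a b -> A1_witness b b g h -> pair_equiv (g ⋅ a) (h ⋅ a) a a.
Proof.
  intros Hab (_ & _ & E & Hg); rewrite mul_star in Hg.
  assert (Ea : h ⋅ a = g ⋅ a) by (apply (R_cancel b a); [apply R_sym, Hab | exact E]).
  split.
  - apply star_mul_fixed, (R_fixed b a); [apply R_sym, Hab | symmetry; exact Hg].
  - intros x y; rewrite Ea; reflexivity.
Qed.

Lemma pair_equiv_idem_mul {a b g h} : R a b -> A1_witness a a g h -> pair_equiv (g ⋅ a) (h ⋅ b) a b.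
Proof.
  intros Hab (_ & _ & E & Hg); rewrite mul_star in Hg.
  assert (Eb : h ⋅ b = g ⋅ b) by (apply (R_cancel a b); [exact Hab | exact E]).
  split.
  - apply star_mul_fixed; symmetry; exact Hg.
  - intros x y; rewrite Eb, !mulA; apply R_cancel_iff, Hab.
Qed.

Lemma pair_equiv_idem_comm {a c g h g' h'} : A1_witness a c g h -> A1_witness c a g' h' ->
  pair_equiv (g ⋅ a) (h ⋅ c) (g' ⋅ c) (h' ⋅ a).
Proof.
  intros Hw Hw'.
  pose proof (A1_witness_star Hw) as Hs; pose proof (A1_witness_star Hw') as Hs'.
  destruct Hw as (_ & _ & E & _), Hw' as (_ & _ & E' & _).
  split; [rewrite Hs, Hs'; apply star_comm|].
  intros x y; rewrite E, E'; reflexivity.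
Qed.

(* a is embedded in the quotient semigroup as u^{-1} (u a), for any [u] with
   [denominator a u]. *)
Definition denominator a u := R u (u ⋅ a) /\ u^* ⋅ a = a.

Lemma denominator_ex a : exists u, denominator a u.
Proof.
  destruct (A1_witness_ex a a^*) as (g & h & Hgh & Hh & E & Hg).
  exists g; split.
  - rewrite <- E; apply R_trans with h; assumption.
  - rewrite star_star, mul_star in Hg; symmetry; exact Hg.
Qed.

(* This is where (A2) is used: u u^* R u a gives u^* u^* R u^* a. *)
Lemma denominator_R {a u} : denominator a u -> R u^* a.
Proof.
  intros [Hu Ha]; rewrite <- (mul_star u) in Hu at 1; apply A2 in Hu.
  rewrite star_idem, Ha in Hu; exact Hu.
Qed.

Lemma denominator_R_iff {a b u v} : denominator a u -> denominator b v -> (R a b <-> u^* = v^*).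
Proof.
  intros Hu Hv; split; intro H.
  - apply R_star_eq, R_trans with a; [apply denominator_R, Hu|].
    apply R_trans with b; [exact H | apply R_sym, denominator_R, Hv].
  - apply R_trans with u^*; [apply R_sym, denominator_R, Hu|].
    rewrite H; apply denominator_R, Hv.
Qed.

Lemma denominator_pair_equiv {a u v} : denominator a u -> denominator a v ->
  pair_equiv u (u ⋅ a) v (v ⋅ a).
Proof.
  intros Hu Hv; pose proof (proj1 (denominator_R_iff Hu Hv) (R_refl a)) as Hs.
  split; [exact Hs|]; intros x y; split; intro E.
  - rewrite !mulA, E; reflexivity.
  - rewrite !mulA in E; apply (R_cancel a u^*) in E; [|apply R_sym, denominator_R, Hu].
    rewrite <- !mulA, mul_star, Hs, mul_star in E; exact E.
Qed.

Lemma denominator_star_self a : denominator a^* a^*.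
Proof. split; [rewrite star_idem; apply R_refl | rewrite star_star, star_idem; reflexivity]. Qed.

Lemma denominator_mul {a b u v g h} : denominator a u -> denominator b v ->
  A1_witness (u ⋅ a) v g h ->
  denominator (a ⋅ b) (g ⋅ u) /\ h ⋅ (v ⋅ b) = g ⋅ u ⋅ (a ⋅ b).
Proof.
  intros [Hu Hua] [Hv Hvb] (_ & _ & E & Hg).
  assert (Eab : h ⋅ (v ⋅ b) = g ⋅ u ⋅ (a ⋅ b)) by (rewrite mulA, E, !mulA; reflexivity).
  split; [split|exact Eab].
  - apply R_trans with (g ⋅ (u ⋅ a)); [apply R_mull, Hu|].
    rewrite <- E, <- Eab; apply R_mull, Hv.
  - assert (Hab : u ⋅ ((g ⋅ u)^* ⋅ (a ⋅ b)) = u ⋅ (a ⋅ b)).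
    { rewrite mulA, <- ample, !mulA, <- (mulA g^* u a), <- Hg, <- (mulA (u ⋅ a) v^* b), Hvb;
        reflexivity. }
    apply star_cancel in Hab; rewrite mulA, star_star_mul, (mulA u^* a b), Hua in Hab; exact Hab.
Qed.

Lemma denominator_inj {a b u v} : denominator a u -> denominator b v ->
  pair_equiv u (u ⋅ a) v (v ⋅ b) -> a = b.
Proof.
  intros [_ Hua] [_ Hvb] [Hs H].
  destruct (A1_witness_ex v u) as (s & t & _ & _ & E & Hs').
  rewrite Hs, mul_star in Hs'.
  assert (Eab : t ⋅ (u ⋅ a) = s ⋅ (v ⋅ b)) by (apply H; exact E).
  rewrite mulA, E, !mulA in Eab; apply star_cancel in Eab.
  rewrite (star_mul_fixed s v (eq_sym Hs')), <- Hs, Hua in Eab.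
  rewrite Eab, Hs; exact Hvb.
Qed.

Lemma pair_equiv_straight {a b u v g h} : R a b -> denominator a u -> denominator b v ->
  A1_witness u v g h -> pair_equiv (g ⋅ (u ⋅ a)) (h ⋅ (v ⋅ b)) a b.
Proof.
  intros Hab Hu Hv (_ & _ & E & Hg).
  rewrite <- (proj1 (denominator_R_iff Hu Hv) Hab), mul_star in Hg.
  split.
  - rewrite mulA; apply star_mul_fixed.
    rewrite (star_mul_fixed g u (eq_sym Hg)); apply Hu.
  - intros x y; rewrite (mulA h v b), E, !mulA; apply R_cancel_iff, Hab.
Qed.

Definition pair_class a b : S -> S -> Prop := fun c d => R c d /\ pair_equiv a b c d.

Lemma pair_class_eq a b c d : R a b -> R c d -> pair_equiv a b c d ->
  pair_class a b = pair_class c d.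
Proof.
  intros Hab Hcd H.
  apply functional_extensionality; intro x; apply functional_extensionality; intro y.
  apply propositional_extensionality; split; intros [Hxy E]; split; try exact Hxy.
  - apply (pair_equiv_trans c d a b); try assumption; apply pair_equiv_sym, H.
  - apply (pair_equiv_trans a b c d); assumption.
Qed.

Definition quotient := {C : S -> S -> Prop | exists a b, R a b /\ C = pair_class a b}.

Definition quotient_of a b (H : R a b) : quotient :=
  exist _ (pair_class a b) (ex_intro _ a (ex_intro _ b (conj H eq_refl))).

Definition represents (p : quotient) a b := R a b /\ proj1_sig p = pair_class a b.

Lemma represents_eq {p q a b c d} : represents p a b -> represents q c d ->
  pair_equiv a b c d -> p = q.
Proof.
  destruct p as [C HC], q as [D HD]; intros [Hab EC] [Hcd ED] H; simpl in *.
  revert HC HD; rewrite EC, ED, (pair_class_eq a b c d Hab Hcd H); intros HC HD.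
  f_equal; apply proof_irrelevance.
Qed.

Lemma represents_pair_equiv {p a b c d} : represents p a b -> represents p c d ->
  pair_equiv a b c d.
Proof.
  intros [_ Eab] [Hcd Ecd].
  assert (Hc : pair_class c d c d) by (split; [exact Hcd | apply pair_equiv_refl, Hcd]).
  rewrite <- Ecd, Eab in Hc; apply Hc.
Qed.

Lemma represents_change {p a b c d} : represents p a b -> R c d -> pair_equiv a b c d ->
  represents p c d.
Proof.
  intros [Hab E] Hcd H; split; [exact Hcd|].
  rewrite E; apply pair_class_eq; assumption.
Qed.

Lemma represents_pair_ex (p : quotient) : exists ab : S * S, represents p (fst ab) (snd ab).
Proof. destruct p as [C (a & b & H & E)]; exists (a, b); split; assumption. Qed.

Lemma represents_ex p : exists a b, represents p a b.
Proof. destruct (represents_pair_ex p) as [[a b] H]; exists a, b; exact H. Qed.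

Definition rep (p : quotient) := constructive_indefinite_description _ (represents_pair_ex p).

Lemma A1_witness_pair_ex b c : exists gh : S * S, A1_witness b c (fst gh) (snd gh).
Proof. destruct (A1_witness_ex b c) as (g & h & H); exists (g, h); exact H. Qed.

Definition A1_choice b c := constructive_indefinite_description _ (A1_witness_pair_ex b c).

Definition qmul (p q : quotient) : quotient :=
  let (ab, Hp) := rep p in
  let (cd, Hq) := rep q in
  let (gh, Hw) := A1_choice (snd ab) (fst cd) in
  quotient_of (fst gh ⋅ fst ab) (snd gh ⋅ snd cd) (R_mul_pair (proj1 Hp) (proj1 Hq) Hw).

Definition qinv (p : quotient) : quotient :=
  let (ab, Hp) := rep p in quotient_of (snd ab) (fst ab) (R_sym _ _ (proj1 Hp)).

Lemma represents_qmul {p q a b c d g h} : represents p a b -> represents q c d ->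
  A1_witness b c g h -> represents (qmul p q) (g ⋅ a) (h ⋅ d).
Proof.
  intros Hp Hq Hw; unfold qmul.
  destruct (rep p) as [[a0 b0] Hp0], (rep q) as [[c0 d0] Hq0]; simpl.
  destruct (A1_choice b0 c0) as [[g0 h0] Hw0]; simpl.
  split; [exact (R_mul_pair (proj1 Hp) (proj1 Hq) Hw)|]; simpl.
  apply pair_class_eq; [exact (R_mul_pair (proj1 Hp0) (proj1 Hq0) Hw0)
                       | exact (R_mul_pair (proj1 Hp) (proj1 Hq) Hw)|].
  exact (pair_equiv_mul _ _ _ _ _ _ _ _ _ _ _ _
           (represents_pair_equiv Hp0 Hp) (represents_pair_equiv Hq0 Hq) Hw0 Hw).
Qed.

Lemma represents_qinv {p a b} : represents p a b -> represents (qinv p) b a.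
Proof.
  intro Hp; unfold qinv; destruct (rep p) as [[a0 b0] Hp0]; simpl.
  split; [apply R_sym, Hp|]; simpl.
  apply pair_class_eq; [apply R_sym, Hp0 | apply R_sym, Hp|].
  apply pair_equiv_swap; [apply Hp0 | apply Hp | exact (represents_pair_equiv Hp0 Hp)].
Qed.

Lemma represents_qmul_qinv {p a b} : represents p a b -> represents (qmul p (qinv p)) a a.
Proof.
  intro Hp; destruct (A1_witness_ex b b) as (g & h & Hw).
  exact (represents_change (represents_qmul Hp (represents_qinv Hp) Hw) (R_refl a)
           (pair_equiv_mul_inv (proj1 Hp) Hw)).
Qed.

Lemma qmulA p q r : qmul p (qmul q r) = qmul (qmul p q) r.
Proof.
  destruct (represents_ex p) as (a & b & Hp), (represents_ex q) as (c & d & Hq),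
    (represents_ex r) as (e & f & Hr).
  destruct (A1_witness_ex b c) as (g & h & Hw), (A1_witness_ex d e) as (g1 & h1 & Hw1).
  destruct (A1_witness_ex (h ⋅ d) e) as (g2 & h2 & Hw2),
    (A1_witness_ex b (g1 ⋅ c)) as (g3 & h3 & Hw3).
  apply (represents_eq (represents_qmul Hp (represents_qmul Hq Hr Hw1) Hw3)
                       (represents_qmul (represents_qmul Hp Hq Hw) Hr Hw2)).
  apply pair_equiv_sym, (pair_equiv_assoc a b c d e f g h g1 h1 g2 h2 g3 h3);
    first [apply Hp | apply Hq | apply Hr | assumption].
Qed.

Lemma qmul_qinv_qmul p : qmul (qmul p (qinv p)) p = p.
Proof.
  destruct (represents_ex p) as (a & b & Hp), (A1_witness_ex a a) as (g & h & Hw).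
  apply (represents_eq (represents_qmul (represents_qmul_qinv Hp) Hp Hw) Hp).
  apply pair_equiv_idem_mul; [apply Hp | exact Hw].
Qed.

Lemma qinv_qinv p : qinv (qinv p) = p.
Proof.
  destruct (represents_ex p) as (a & b & Hp).
  apply (represents_eq (represents_qinv (represents_qinv Hp)) Hp), pair_equiv_refl, Hp.
Qed.

Lemma qinv_qmul p q : qinv (qmul p q) = qmul (qinv q) (qinv p).
Proof.
  destruct (represents_ex p) as (a & b & Hp), (represents_ex q) as (c & d & Hq),
    (A1_witness_ex b c) as (g & h & Hw).
  pose proof (represents_qinv (represents_qmul Hp Hq Hw)) as Hl.
  apply (represents_eq Hl
    (represents_qmul (represents_qinv Hq) (represents_qinv Hp) (A1_witness_sym Hw))).
  apply pair_equiv_refl, Hl.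
Qed.

Lemma qmul_qinv_comm p q :
  qmul (qmul p (qinv p)) (qmul q (qinv q)) = qmul (qmul q (qinv q)) (qmul p (qinv p)).
Proof.
  destruct (represents_ex p) as (a & b & Hp), (represents_ex q) as (c & d & Hq).
  destruct (A1_witness_ex a c) as (g & h & Hw), (A1_witness_ex c a) as (g' & h' & Hw').
  pose proof (represents_qmul_qinv Hp) as Ha; pose proof (represents_qmul_qinv Hq) as Hc.
  apply (represents_eq (represents_qmul Ha Hc Hw) (represents_qmul Hc Ha Hw')).
  apply pair_equiv_idem_comm; assumption.
Qed.

Lemma quotient_inverse_semigroup : inverse_semigroup qmul qinv.
Proof.
  apply inverse_semigroup_intro;
    [exact qmulA | exact qmul_qinv_qmul | exact qinv_qinv | exact qinv_qmul | exact qmul_qinv_comm].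
Qed.

Definition denominator_choice a := constructive_indefinite_description _ (denominator_ex a).

Definition embed a : quotient :=
  let (u, Hu) := denominator_choice a in quotient_of u (u ⋅ a) (proj1 Hu).

Lemma represents_embed {a u} : denominator a u -> represents (embed a) u (u ⋅ a).
Proof.
  intro Hu; unfold embed; destruct (denominator_choice a) as [u0 Hu0]; simpl.
  split; [apply Hu|]; simpl.
  apply pair_class_eq; [apply Hu0 | apply Hu | exact (denominator_pair_equiv Hu0 Hu)].
Qed.

Lemma embed_greenR a b : greenR qmul (embed a) (embed b) <-> R a b.
Proof.
  destruct (denominator_ex a) as [u Hu], (denominator_ex b) as [v Hv].
  rewrite (greenR_iff _ _ _ quotient_inverse_semigroup), (denominator_R_iff Hu Hv).
  pose proof (represents_qmul_qinv (represents_embed Hu)) as Hau.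
  pose proof (represents_qmul_qinv (represents_embed Hv)) as Hbv.
  split; intro H.
  - rewrite H in Hau; apply (represents_pair_equiv Hau Hbv).
  - apply (represents_eq Hau Hbv), pair_equiv_diag, H.
Qed.

Lemma embed_inj a b : embed a = embed b -> a = b.
Proof.
  intro E; destruct (denominator_ex a) as [u Hu], (denominator_ex b) as [v Hv].
  pose proof (represents_embed Hu) as Hau; rewrite E in Hau.
  exact (denominator_inj Hu Hv (represents_pair_equiv Hau (represents_embed Hv))).
Qed.

Lemma embed_mul a b : embed (a ⋅ b) = qmul (embed a) (embed b).
Proof.
  destruct (denominator_ex a) as [u Hu], (denominator_ex b) as [v Hv],
    (A1_witness_ex (u ⋅ a) v) as (g & h & Hw).
  pose proof (represents_qmul (represents_embed Hu) (represents_embed Hv) Hw) as Hab.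
  destruct (denominator_mul Hu Hv Hw) as [Huv E]; rewrite E in Hab.
  apply (represents_eq (represents_embed Huv) Hab), pair_equiv_refl, Hab.
Qed.

Lemma embed_straight (q : quotient) : exists a b : S,
  q = qmul (qinv (embed a)) (embed b) /\ greenR qmul (embed a) (embed b).
Proof.
  destruct (represents_ex q) as (a & b & Hq); exists a, b; split; [|apply embed_greenR, Hq].
  destruct (denominator_ex a) as [u Hu], (denominator_ex b) as [v Hv],
    (A1_witness_ex u v) as (g & h & Hw).
  apply (represents_eq Hq
    (represents_qmul (represents_qinv (represents_embed Hu)) (represents_embed Hv) Hw)).
  apply pair_equiv_sym, (pair_equiv_straight (proj1 Hq) Hu Hv Hw).
Qed.

Lemma embed_star a : embed a^* = qmul (qinv (embed a)) (embed a).
Proof.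
  destruct (denominator_ex a) as [u Hu], (denominator_ex a^*) as [w Hw],
    (A1_witness_ex u u) as (g & h & Hg).
  pose proof (R_sym _ _ (proj1 Hu)) as Hua.
  pose proof (represents_change
    (represents_qmul (represents_qinv (represents_embed Hu)) (represents_embed Hu) Hg)
    (R_refl _) (pair_equiv_mul_inv Hua Hg)) as Hr.
  pose proof (represents_change (represents_embed Hw) (proj1 (denominator_star_self a))
    (denominator_pair_equiv Hw (denominator_star_self a))) as Hl.
  apply (represents_eq Hl Hr); rewrite star_idem; apply pair_equiv_diag.
  rewrite star_star; symmetry; apply star_mul_fixed, Hu.
Qed.

Lemma sufficiency : straight_left_Iquotients_with mul star R.
Proof.
  exists quotient, qmul, qinv, embed.
  split; [exact quotient_inverse_semigroup|].
  split; [exact embed_inj|]; split; [exact embed_mul|]; split; [exact embed_straight|].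
  split; [exact embed_star | exact embed_greenR].
Qed.

End Sufficiency.

End RightAmple.

Theorem theorem4p6 (S : Type) (mul : S -> S -> S) (star : S -> S)
    (Hample : right_ample mul star) (R' : S -> S -> Prop) :
  straight_left_Iquotients_with mul star R' <->
  (left_congruence mul R' /\
   (* (A1) *)
   (forall alpha beta : S, exists gamma delta : S,
      R' gamma delta /\ R' delta (mul delta beta) /\
      mul delta beta = mul gamma alpha /\
      mul alpha (star beta) = mul (star gamma) alpha) /\
   (* (A2) *)
   (forall alpha beta gamma : S,
      R' (mul gamma alpha) (mul gamma beta) ->
      R' (mul (star gamma) alpha) (mul (star gamma) beta)) /\
   (* (A3) *)
   (forall a b : S, R' a b -> Rstar mul a b)).
Proof.
  split.
  - intros (Q & m & i & f & HI & f_inj & f_mul & f_straight & f_star & f_greenR).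
    split; [|split; [|split]].
    + eapply necessary_left_congruence; eassumption.
    + eapply necessary_A1; eassumption.
    + eapply necessary_A2; eassumption.
    + eapply necessary_A3; eassumption.
  - intros (Hlc & HA1 & HA2 & HA3).
    eapply sufficiency; eassumption.
Qed.
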